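(* Let $R$ be a commutative elementary divisor domain and let $E=\mathrm{diag}(\varepsilon_1,\dots,\varepsilon_k,0,\dots,0)$ and $\Phi=\mathrm{diag}(\varphi_1,\dots,\varphi_t,0,\dots,0)$ be $n\times n$ $d$-matrices with $\varepsilon_k\ne0$, $\varphi_t\ne0$. If $\Phi\mid E$ (i.e. $k\le t$ and $\varphi_i\mid\varepsilon_i$ for $i=1,\dots,k$), then $\mathbf L(E,\Phi)$ consists exactly of the invertible $n\times n$ matrices $L=(l_{ij})$ such that $\frac{\varphi_i}{(\varphi_i,\varepsilon_j)}\mid l_{ij}$ for all $1\le i\le t$, $1\le j\le k$, and $l_{ij}=0$ for all $t<i\le n$, $1\le j\le k$ (entries in columns $k+1,\dots,n$ are unrestricted). If $\Phi\nmid E$, then $\mathbf L(E,\Phi)=\emptyset$.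
   Context: Elementary divisor domain: commutative integral domain over which every matrix is equivalent to a $d$-matrix, i.e. a diagonal matrix $\mathrm{diag}(\varphi_1,\dots)$ with $\varphi_i\mid\varphi_{i+1}$. For $n\times n$ $d$-matrices $E,\Phi$, the generating set is $\mathbf L(E,\Phi)=\{L\in GL_n(R):\ \exists S\in M_n(R),\ LE=\Phi S\}$. *)

From HB Require Import structures.
From mathcomp Require Import all_boot all_order all_algebra.
Set Implicit Arguments. Unset Strict Implicit. Unset Printing Implicit Defensive.
Import GRing.Theory.
Local Open Scope ring_scope.

Definition dvdr {R : comUnitRingType} (a b : R) : Prop := exists c : R, b = c * a.

Definition is_gcdr {R : comUnitRingType} (g a b : R) : Prop :=
  [/\ dvdr g a, dvdr g b & forall d, dvdr d a -> dvdr d b -> dvdr d g].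

Definition is_dmatrix {R : comUnitRingType} {m n : nat} (A : 'M[R]_(m, n)) : Prop :=
  (forall (i : 'I_m) (j : 'I_n), (i : nat) <> j -> A i j = 0) /\
  (forall (i i' : 'I_m) (j j' : 'I_n),
      (i : nat) = j -> (i' : nat) = j' -> (i' : nat) = i.+1 ->
      dvdr (A i j) (A i' j')).

Definition elementary_divisor_domain (R : idomainType) : Prop :=
  forall (m n : nat) (A : 'M[R]_(m, n)),
    exists (P : 'M[R]_m) (Q : 'M[R]_n),
      [/\ P \in unitmx, Q \in unitmx & is_dmatrix (P *m A *m Q)].

Definition Lset {R : comUnitRingType} {n : nat} (E Phi : 'M[R]_n) : 'M[R]_n -> Prop :=
  fun L => L \in unitmx /\ exists S : 'M[R]_n, L *m E = Phi *m S.

(* Phi | E for d-matrices E = diag(eps_1..eps_k,0..), Phi = diag(phi_1..phi_t,0..):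
   k <= t and phi_i | eps_i for i = 1..k (0-indexed here: i < k). *)
Definition dmx_dvd {R : comUnitRingType} {n : nat} (k t : nat) (Phi E : 'M[R]_n) : Prop :=
  (k <= t)%N /\ forall i : 'I_n, (i < k)%N -> dvdr (Phi i i) (E i i).

(* "phi / (phi, eps) divides l": for some gcd g of phi and eps, phi = q * g
   with q dividing l. *)
Definition quot_gcd_dvd {R : comUnitRingType} (phi eps l : R) : Prop :=
  exists g q : R, [/\ is_gcdr g phi eps, phi = q * g & dvdr q l].

(* Entrywise, [L E = Phi S] says exactly that [phi_i | l_ij eps_j].  In an
   elementary divisor domain a gcd g of phi and eps is a linear combination
   x phi + y eps, so phi/g and eps/g are coprime and [phi | l eps] is
   equivalent to [phi/g | l].  If moreover L is invertible and eps_m <> 0,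
   then q = phi_m/(phi_m, eps_m) divides every l_ij with i >= m and j <= m
   (the d-matrix chains give phi_m | phi_i and eps_j | eps_m); this block has
   n - m rows and m + 1 columns, so it meets every term of the Leibniz
   expansion and q divides det L, a unit.  Hence phi_m | eps_m whenever
   eps_m <> 0, which is Phi | E. *)

From HB Require Import structures.
From mathcomp Require Import all_boot all_order all_algebra ring perm.
Set Implicit Arguments. Unset Strict Implicit. Unset Printing Implicit Defensive.
Import GRing.Theory.
Local Open Scope ring_scope.

Section Divisibility.
Variable R : comUnitRingType.
Implicit Types a b c : R.

Lemma dvdr_refl a : dvdr a a.
Proof. by exists 1; rewrite mul1r. Qed.

Lemma dvdr_trans a b c : dvdr a b -> dvdr b c -> dvdr a c.
Proof. by move=> [x ->] [y ->]; exists (y * x); rewrite mulrA. Qed.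

Lemma dvdr_mull a b c : dvdr a b -> dvdr a (c * b).
Proof. by move=> [x ->]; exists (c * x); rewrite mulrA. Qed.

Lemma dvdr_mulr a b c : dvdr a b -> dvdr a (b * c).
Proof. by move=> H; rewrite mulrC; apply: dvdr_mull. Qed.

Lemma dvdr_add a b c : dvdr a b -> dvdr a c -> dvdr a (b + c).
Proof. by move=> [x ->] [y ->]; exists (x + y); rewrite mulrDl. Qed.

Lemma dvdr0 a : dvdr a 0.
Proof. by exists 0; rewrite mul0r. Qed.

Lemma dmatrix_dvdr_diag n (D : 'M[R]_n) : is_dmatrix D ->
  forall i i' : 'I_n, (i <= i')%N -> dvdr (D i i) (D i' i').
Proof.
move=> [_ hD] i i' le_ii'.
have : i' = (i + (i' - i))%N :> nat by rewrite subnKC.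
move: (i' - i)%N => p; elim: p i' {le_ii'} => [|p IHp] i' def_i'.
  have -> : i' = i by apply/val_inj; rewrite /= def_i' addn0.
  exact: dvdr_refl.
have lt_n : (i + p < n)%N by rewrite (leq_trans _ (ltn_ord i')) // def_i' addnS.
apply: (dvdr_trans (IHp (Ordinal lt_n) erefl)).
by apply: hD => //; rewrite def_i' addnS.
Qed.

Lemma mulmx_diag_r n (A D : 'M[R]_n) :
  (forall i j : 'I_n, (i : nat) <> j -> D i j = 0) ->
  forall i j, (A *m D) i j = A i j * D j j.
Proof.
move=> hD i j; rewrite mxE (bigD1 j) //= big1 ?addr0 // => l /eqP ne_lj.
by rewrite hD ?mulr0 // => /val_inj.
Qed.

Lemma mulmx_diag_l n (A D : 'M[R]_n) :
  (forall i j : 'I_n, (i : nat) <> j -> D i j = 0) ->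
  forall i j, (D *m A) i j = D i i * A i j.
Proof.
move=> hD i j; rewrite mxE (bigD1 i) //= big1 ?addr0 // => l /eqP ne_li.
by rewrite hD ?mul0r // => /esym /val_inj.
Qed.

Lemma LsetE n (E Phi L : 'M[R]_n) : is_dmatrix E -> is_dmatrix Phi ->
  Lset E Phi L <-> L \in unitmx /\ forall i j, dvdr (Phi i i) (L i j * E j j).
Proof.
move=> [dE _] [dPhi _]; split=> [[uL [S LE]] | [uL dvdLE]].
  split=> // i j; exists (S i j).
  by rewrite -(mulmx_diag_r L dE) LE (mulmx_diag_l S dPhi) mulrC.
split=> //.
have /fin_all_exists [S hS] : forall i, exists Si : 'I_n -> R,
    forall j, L i j * E j j = Si j * Phi i i.
  by move=> i; apply: (fin_all_exists (dvdLE i)).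
exists (\matrix_(i, j) S i j); apply/matrixP => i j.
by rewrite (mulmx_diag_r L dE) (mulmx_diag_l _ dPhi) mxE hS mulrC.
Qed.

(* Pigeonhole: s^-1 cannot map the m + 1 indices [0, m] into [0, m - 1]. *)
Lemma perm_exists_ge_le n m (s : 'S_n) : (m < n)%N ->
  exists i : 'I_n, (m <= i)%N && (s i <= m)%N.
Proof.
move=> lt_mn.
have [/existsP // | /existsPn none] := boolP [exists i : 'I_n, (m <= i)%N && (s i <= m)%N].
exfalso.
have lt_m (x : 'I_m.+1) : ((s^-1)%g (widen_ord lt_mn x) < m)%N.
  rewrite ltnNge; apply/negP => le_m; move: (none ((s^-1)%g (widen_ord lt_mn x))).
  by rewrite le_m permKV /= -ltnS ltn_ord.
pose f (x : 'I_m.+1) : 'I_m := Ordinal (lt_m x).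
have inj_f : injective f.
  move=> x y /(congr1 val) /= /val_inj /perm_inj /(congr1 val) /= exy.
  exact: val_inj.
by move: (leq_card f inj_f); rewrite !card_ord ltnn.
Qed.

Lemma dvdr_det_block n m (L : 'M[R]_n) (q : R) : (m < n)%N ->
  (forall i j : 'I_n, (m <= i)%N -> (j <= m)%N -> dvdr q (L i j)) ->
  dvdr q (\det L).
Proof.
move=> lt_mn dvd_block; apply: (big_ind (dvdr q)) => [||s _].
- exact: dvdr0.
- exact: dvdr_add.
apply: dvdr_mull; have [i /andP [le_mi le_sim]] := perm_exists_ge_le s lt_mn.
by rewrite (bigD1 i) //=; apply/dvdr_mulr/dvd_block.
Qed.

End Divisibility.

Section ElementaryDivisorDomain.
Variable R : idomainType.
Hypothesis hR : elementary_divisor_domain R.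

(* Reduce the row (a b) to a d-matrix (g 0): g is a combination of a and b,
   and the row is recovered from g through the inverse transformations. *)
Lemma edd_bezout (a b : R) :
  exists g x y, [/\ dvdr g a, dvdr g b & g = x * a + y * b].
Proof.
pose A : 'M[R]_(1, 2) := \matrix_(i, j) if (j : nat) == 0%N then a else b.
have [P [Q [uP uQ [dD _]]]] := hR A.
have [D def_D] : {D | D = P *m A *m Q} by eexists.
rewrite -def_D in dD.
have lift01 : (lift ord0 ord0 : 'I_2) = 1 by apply: val_inj.
have D01 : D 0 1 = 0 by apply: dD.
have A_D j : A 0 j = invmx P 0 0 * invmx Q 0 j * D 0 0.
  have -> : A = invmx P *m D *m invmx Q by rewrite def_D mulmxA mulmxK // mulKmx.
  rewrite !mxE big_ord_recl big_ord1 !mxE !big_ord1 lift01.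
  by rewrite D01 mulr0 mul0r addr0 mulrAC.
exists (D 0 0), (P 0 0 * Q 0 0), (P 0 0 * Q 1 0); split.
- by exists (invmx P 0 0 * invmx Q 0 0); rewrite -A_D mxE.
- by exists (invmx P 0 0 * invmx Q 0 1); rewrite -A_D mxE.
rewrite def_D !mxE big_ord_recl big_ord1 !mxE !big_ord1 !mxE /= lift01.
by rewrite [_ * a * _]mulrAC [_ * b * _]mulrAC.
Qed.

(* With phi = q g and eps = e g, Bezout gives x q + y e = 1, i.e. q and e are
   coprime, and phi | l eps means q | l e. *)
Lemma dvdr_quot_of_bezout (phi eps l g x y q : R) :
  dvdr g eps -> g = x * phi + y * eps -> g != 0 -> phi = q * g ->
  dvdr phi (l * eps) -> dvdr q l.
Proof.
move=> [e def_eps] def_g nz_g def_phi [s def_leps].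
have coprime_qe : x * q + y * e = 1.
  by apply: (mulIf nz_g); rewrite mul1r [in RHS]def_g def_phi def_eps; ring.
have dvd_le : l * e = s * q.
  by apply: (mulIf nz_g); rewrite -mulrA -def_eps def_leps def_phi; ring.
exists (l * x + y * s).
by rewrite -[LHS]mulr1 -coprime_qe mulrDr [l * (y * e)]mulrCA dvd_le; ring.
Qed.

Lemma quot_gcd_dvdE (phi eps l : R) :
  quot_gcd_dvd phi eps l <-> dvdr phi (l * eps).
Proof.
split=> [[g [q [[_ [e ->] _] -> [c ->]]]] | dvd_leps].
  by exists (c * e); ring.
have [g [x [y [dvd_g_phi dvd_g_eps def_g]]]] := edd_bezout phi eps.
have gcd_g : is_gcdr g phi eps.
  by split=> // d dvd_phi dvd_eps; rewrite def_g; apply: dvdr_add; apply: dvdr_mull.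
have [g0 | nz_g] := eqVneq g 0.
  exists g, 1; split=> //; last by exists l; rewrite mulr1.
  by case: dvd_g_phi => c ->; rewrite g0 !mulr0.
have [q def_phi] := dvd_g_phi.
by exists g, q; split=> //; apply: (dvdr_quot_of_bezout dvd_g_eps def_g nz_g).
Qed.

Lemma Lset_dvdr_diag n (E Phi L : 'M[R]_n) :
  is_dmatrix E -> is_dmatrix Phi -> Lset E Phi L ->
  forall m, E m m != 0 -> dvdr (Phi m m) (E m m).
Proof.
move=> dE dPhi /(LsetE _ dE dPhi) [uL dvdLE] m nz_Em.
have [g [x [y [[q def_phi] [e def_eps] def_g]]]] := edd_bezout (Phi m m) (E m m).
have nz_g : g != 0 by apply: contra_neq nz_Em => g0; rewrite def_eps g0 mulr0.
have dvd_block (i j : 'I_n) : (m <= i)%N -> (j <= m)%N -> dvdr q (L i j).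
  move=> le_mi le_jm; apply: (dvdr_quot_of_bezout _ def_g nz_g def_phi).
    by exists e.
  apply: (dvdr_trans (dmatrix_dvdr_diag dPhi le_mi)).
  apply: (dvdr_trans (dvdLE i j)).
  by have [c ->] := dmatrix_dvdr_diag dE le_jm; exists c; ring.
have [c def_det] := dvdr_det_block (ltn_ord m) dvd_block.
have unit_q : q \is a GRing.unit.
  by move: uL; rewrite unitmxE def_det unitrM => /andP [].
by exists (e * q^-1); rewrite def_eps def_phi mulrA mulrVK.
Qed.

End ElementaryDivisorDomain.

Theorem theorem4p1 (R : idomainType) (hR : elementary_divisor_domain R)
    (n k t : nat) (E Phi : 'M[R]_n)
    (hE : is_dmatrix E) (hPhi : is_dmatrix Phi)
    (hk : (0 < k <= n)%N) (ht : (0 < t <= n)%N)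
    (hEk : forall i : 'I_n, (E i i != 0) = (i < k)%N)
    (hPt : forall i : 'I_n, (Phi i i != 0) = (i < t)%N) :
  (dmx_dvd k t Phi E ->
     forall L : 'M[R]_n,
       Lset E Phi L <->
       (L \in unitmx /\
        forall (i j : 'I_n), (j < k)%N ->
          ((i < t)%N -> quot_gcd_dvd (Phi i i) (E j j) (L i j)) /\
          ((t <= i)%N -> L i j = 0)))
  /\
  (~ dmx_dvd k t Phi E -> forall L : 'M[R]_n, ~ Lset E Phi L).
Proof.
have Phi0 (i : 'I_n) : (t <= i)%N -> Phi i i = 0.
  by move=> le_ti; apply/eqP; rewrite -[_ == _]negbK hPt -leqNgt.
have E0 (j : 'I_n) : (k <= j)%N -> E j j = 0.
  by move=> le_kj; apply/eqP; rewrite -[_ == _]negbK hEk -leqNgt.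
have nz_E (j : 'I_n) : (j < k)%N -> E j j != 0 by rewrite hEk.
split=> [_ L | not_dvd L LsetL]; last first.
  have dvd_diag := Lset_dvdr_diag hR hE hPhi LsetL.
  apply: not_dvd; split=> [|i lt_ik]; last by apply/dvd_diag/nz_E.
  rewrite leqNgt; apply/negP => lt_tk.
  have lt_tn : (t < n)%N by apply: (leq_trans lt_tk); case/andP: hk.
  have [c] := dvd_diag _ (nz_E (Ordinal lt_tn) lt_tk).
  by rewrite Phi0 // mulr0; apply/eqP/nz_E.
rewrite LsetE //; split=> [[uL dvdLE] | [uL hL]]; split=> // i j.
  move=> lt_jk; split=> [lt_it | le_ti]; first by apply/(quot_gcd_dvdE hR).
  have [c] := dvdLE i j; rewrite Phi0 // mulr0 => /eqP.
  by rewrite mulf_eq0 (negPf (nz_E j lt_jk)) orbF => /eqP.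
have [lt_jk | le_kj] := ltnP j k; last by rewrite E0 // mulr0; apply: dvdr0.
have [lt_it | le_ti] := ltnP i t; first by apply/(quot_gcd_dvdE hR)/(hL i j lt_jk).1.
by rewrite ((hL i j lt_jk).2 le_ti) mul0r; apply: dvdr0.
Qed.
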